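(* The families $\{d_\xi^{-1/2}\Pi_{\xi\alpha\beta}\}_{\xi,\alpha,\beta}$ and $\{d_\xi^{-1/2}\mathrm{Twirl}_{\xi\alpha\beta}\}_{\xi,\alpha,\beta}$ (over all isomorphism types $\xi$ occurring in $\mathcal L(V)$ and $1\le\alpha,\beta\le m_\xi$) are both orthonormal bases of $\mathrm{Hom}_G(\mathcal L(V),\mathcal L(V))$, which has dimension $\sum_\xi m_\xi^2$. Consequently the square matrix $U$ with entries \[ U_{(\xi,\alpha,\beta),(\rho,\mu,\nu)}=\Big\langle\!\!\Big\langle \tfrac1{\sqrt{d_\xi}}\Pi_{\xi\alpha\beta},\tfrac1{\sqrt{d_\rho}}\mathrm{Twirl}_{\rho\mu\nu}\Big\rangle\!\!\Big\rangle \] is unitary.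
   Context: Let $G$ be a group and $V$ a finite-dimensional complex Hilbert space carrying a unitary representation $\rho$ of $G$; $G$ acts on $\mathcal L(V)$ by conjugation $g\cdot X=\rho(g)X\rho(g)^\dagger$, unitarily for the Hilbert–Schmidt inner product $\langle X_1,X_2\rangle=\mathrm{Tr}(X_1^\dagger X_2)$. Let $\mathcal L(V)=\bigoplus_\xi\mathcal E_\xi$ be the isotypic decomposition, $m_\xi$ the multiplicity and $d_\xi$ the dimension of the irreducible type $\xi$. Choose an orthogonal decomposition $\mathcal E_\xi=\bigoplus_{\alpha=1}^{m_\xi}\mathcal E_{\xi\alpha}$ into irreducible subrepresentations, $G$-equivariant isometric isomorphisms $\phi^\xi_{1\alpha}:\mathcal E_{\xi1}\to\mathcal E_{\xi\alpha}$ with $\phi^\xi_{11}=\mathrm{id}$, and set $\phi^\xi_{\alpha\beta}=\phi^\xi_{1\beta}(\phi^\xi_{1\alpha})^\dagger$. Fix an orthonormal basis $\{E_i^1\}_{i=1}^{d_\xi}$ of $\mathcal E_{\xi1}$ and put $E_i^\alpha=\phi^\xi_{1\alpha}(E_i^1)$ (the dependence on $\xi$ is suppressed). Define the projector matrix units $\Pi_{\xi\alpha\beta}(X)=\sum_{i=1}^{d_\xi}\langle E_i^\alpha,X\rangle E_i^\beta$ and twirl matrix units $\mathrm{Twirl}_{\xi\alpha\beta}(X)=\sum_{i=1}^{d_\xi}(E_i^\alpha)^\dagger XE_i^\beta$. On linear maps $\mathcal L(V)\to\mathcal L(V)$ use $\langle\!\langle\mathcal S,\mathcal T\rangle\!\rangle=\mathrm{Tr}(\mathcal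 S^\dagger\mathcal T)=\sum_{Y\in\mathcal B}\langle\mathcal S(Y),\mathcal T(Y)\rangle$ ($\mathcal B$ any orthonormal basis of $\mathcal L(V)$). $\mathrm{Hom}_G(\mathcal L(V),\mathcal L(V))$ is the space of $G$-equivariant linear maps. *)

From HB Require Import structures.
From mathcomp Require Import monoid.
From mathcomp Require Import all_boot all_order all_algebra.
From mathcomp Require Import complex.
From mathcomp Require Import reals.

Set Implicit Arguments.
Unset Strict Implicit.
Unset Printing Implicit Defensive.

Import GRing.Theory Num.Theory.
Local Open Scope ring_scope.

Section Defs.
Variable R : realType.
Local Notation C := R[i].

Definition adjmx (p q : nat) (A : 'M[C]_(p, q)) : 'M[C]_(q, p) :=
  (map_mx Num.conj A)^T.

Definition unitary_mx (p : nat) (A : 'M[C]_p) : Prop :=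
  adjmx A *m A = 1%:M /\ A *m adjmx A = 1%:M.

Variable n : nat.
(* V = C^n, L(V) = 'M[C]_n. *)

Definition hs (X Y : 'M[C]_n) : C := \tr (adjmx X *m Y).

(* inner product on linear maps L(V) -> L(V), computed with the
   orthonormal basis of matrix units {delta_mx i j} of L(V) *)
Definition hs_maps (S T : 'M[C]_n -> 'M[C]_n) : C :=
  \sum_(i < n) \sum_(j < n) hs (S (delta_mx i j)) (T (delta_mx i j)).

Variable G : groupType.

Definition unitary_rep (rho : G -> 'M[C]_n) : Prop :=
  [/\ (forall x y : G, rho (x * y)%g = rho x *m rho y),
      rho 1%g = 1%:M
    & (forall x : G, unitary_mx (rho x))].

Variable rho : G -> 'M[C]_n.

Definition conj_act (g : G) (X : 'M[C]_n) : 'M[C]_n :=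
  rho g *m X *m adjmx (rho g).

Definition equivariant (T : 'M[C]_n -> 'M[C]_n) : Prop :=
  forall (g : G) (X : 'M[C]_n), T (conj_act g X) = conj_act g (T X).

Definition invariant_sub (W : {vspace 'M[C]_n}) : Prop :=
  forall (g : G) (X : 'M[C]_n), X \in W -> conj_act g X \in W.

Definition irreducible_sub (W : {vspace 'M[C]_n}) : Prop :=
  [/\ W != 0%VS, invariant_sub W &
      (forall U : {vspace 'M[C]_n}, (U <= W)%VS -> invariant_sub U ->
        U = 0%VS \/ U = W)].

Definition isomorphic_sub (U W : {vspace 'M[C]_n}) : Prop :=
  exists f : 'End('M[C]_n),
    [/\ (f @: U)%VS = W, \dim W = \dim U &
        (forall (g : G) (X : 'M[C]_n), X \in U -> f (conj_act g X) = conj_act g (f X))].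

(* Decomposition data: I indexes the distinct irreducible types xi occurring
   in L(V), m xi is the multiplicity, d xi the dimension, and
   E xi a i = E_i^a is the i-th vector of the chosen orthonormal basis of
   E_{xi a}, with E_i^a = phi_{1 a}(E_i^1). *)
Variables (I : finType) (m d : I -> nat).
Variable E : forall xi : I, 'I_(m xi) -> 'I_(d xi) -> 'M[C]_n.

Definition Esp (xi : I) (a : 'I_(m xi)) : {vspace 'M[C]_n} :=
  <<[seq E a i | i : 'I_(d xi)]>>%VS.

(* phi_{a b} : E_{xi a} -> E_{xi b}, E_i^a |-> E_i^b (extended by the
   orthogonal projection onto E_{xi a}) *)
Definition phi (xi : I) (a b : 'I_(m xi)) (X : 'M[C]_n) : 'M[C]_n :=
  \sum_(i < d xi) hs (E a i) X *: E b i.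

Definition Proj (xi : I) (a b : 'I_(m xi)) (X : 'M[C]_n) : 'M[C]_n :=
  \sum_(i < d xi) hs (E a i) X *: E b i.

Definition Twirl (xi : I) (a b : 'I_(m xi)) (X : 'M[C]_n) : 'M[C]_n :=
  \sum_(i < d xi) adjmx (E a i) *m X *m E b i.

(* The hypotheses on the data:
   - every type xi occurs (m xi >= 1);
   - {E_i^a}_{xi,a,i} is orthonormal and the E_{xi a} span L(V), i.e.
     L(V) = (+)_{xi,a} E_{xi a} is an orthogonal decomposition and each
     {E_i^a}_i is an orthonormal basis of E_{xi a};
   - each E_{xi a} is an irreducible subrepresentation;
   - the maps phi_{a b} : E_i^a |-> E_i^b are G-equivariant on E_{xi a}
     (they are isometric isomorphisms as they map an orthonormal basis to
     an orthonormal basis);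
   - distinct xi are distinct isomorphism types, so that
     E_xi = (+)_a E_{xi a} is the xi-isotypic component. *)
Definition decomposition : Prop :=
  (forall xi, (0 < m xi)%N) /\
      (forall (xi xi' : I) (a : 'I_(m xi)) (a' : 'I_(m xi'))
             (i : 'I_(d xi)) (i' : 'I_(d xi')),
        hs (E a i) (E a' i') =
          ((xi == xi') && (a == a' :> nat) && (i == i' :> nat))%:R) /\
      (\sum_(xi : I) \sum_(a < m xi) Esp a)%VS = fullv /\
      (forall (xi : I) (a : 'I_(m xi)), irreducible_sub (Esp a)) /\
      (forall (xi : I) (a b : 'I_(m xi)) (g : G) (i : 'I_(d xi)),
        phi a b (conj_act g (E a i)) = conj_act g (E b i)) /\
    (forall (xi xi' : I) (a : 'I_(m xi)) (a' : 'I_(m xi')),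
        xi != xi' -> ~ isomorphic_sub (Esp a) (Esp a')).

Definition pairT (xi : I) : finType := ('I_(m xi) * 'I_(m xi))%type.
Definition Idx : finType := {xi : I & pairT xi}.

Definition PiN (k : Idx) : 'End('M[C]_n) :=
  (sqrtC (d (tag k))%:R)^-1 *: linfun (Proj (tagged k).1 (tagged k).2).
Definition TwN (k : Idx) : 'End('M[C]_n) :=
  (sqrtC (d (tag k))%:R)^-1 *: linfun (Twirl (tagged k).1 (tagged k).2).

Definition orthonormal_family (F : Idx -> 'End('M[C]_n)) : Prop :=
  forall k k' : Idx, hs_maps (F k) (F k') = (k == k')%:R.

Definition Umx : 'M[C]_#|Idx| :=
  \matrix_(p < #|Idx|, q < #|Idx|) hs_maps (PiN (enum_val p)) (TwN (enum_val q)).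

End Defs.

From HB Require Import structures.
From mathcomp Require Import monoid.
From mathcomp Require Import all_boot all_order all_algebra.
From mathcomp Require Import complex.
From mathcomp Require Import reals.
From mathcomp Require Import ring.
Import GRing.Theory Num.Theory.
Local Open Scope ring_scope.
Set Implicit Arguments.
Unset Strict Implicit.
Unset Printing Implicit Defensive.

(* By Schur's lemma an equivariant map f sends E_{xi a} into E_xi and acts, in
   the bases {E_i^a}_i, by scalar blocks lambda_{ab}; hence
   f = sum lambda_{ab} Pi_{xi a b}, and the equivariant Pi_{xi a b} span Hom_G.
   Both <<Pi_{xi a b}, Pi_{rho mu nu}>> and <<Twirl_{xi a b}, Twirl_{rho mu nu}>>
   equal sum_{i,i'} <E_i'^mu, E_i^a> <E_i^b, E_i'^nu>, which is d_xi or 0, so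
   both normalized families are orthonormal.  The twirls are equivariant too,
   so both families are orthonormal bases of Hom_G, and U, their Gram matrix,
   is unitary. *)

Lemma exchange_big22 (V : nmodType) (T1 T2 T3 T4 : finType)
    (F : T1 -> T2 -> T3 -> T4 -> V) :
  \sum_i1 \sum_i2 \sum_i3 \sum_i4 F i1 i2 i3 i4
    = \sum_i3 \sum_i4 \sum_i1 \sum_i2 F i1 i2 i3 i4.
Proof.
under eq_bigr => i1 _ do rewrite exchange_big.
rewrite exchange_big; apply: eq_bigr => i3 _.
by under eq_bigr => i1 _ do rewrite exchange_big; rewrite exchange_big.
Qed.

Section HilbertSchmidt.
Variables (R : realType) (n : nat).
Local Notation C := R[i].
Implicit Types X Y A B : 'M[C]_n.

Lemma adjmxE p q (A : 'M[C]_(p, q)) i j : adjmx A i j = (A j i)^*.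
Proof. by rewrite /adjmx !mxE. Qed.

Lemma adjmx_mul p q r (A : 'M[C]_(p, q)) (B : 'M[C]_(q, r)) :
  adjmx (A *m B) = adjmx B *m adjmx A.
Proof. by rewrite /adjmx map_mxM trmx_mul. Qed.

Lemma adjmxK p q (A : 'M[C]_(p, q)) : adjmx (adjmx A) = A.
Proof. by apply/matrixP => i j; rewrite !adjmxE conjCK. Qed.

Lemma adjmxZ p q a (A : 'M[C]_(p, q)) : adjmx (a *: A) = a^* *: adjmx A.
Proof. by apply/matrixP => i j; rewrite !mxE rmorphM. Qed.

Lemma adjmx_sum p q (J : Type) (r : seq J) (P : pred J) (F : J -> 'M[C]_(p, q)) :
  adjmx (\sum_(j <- r | P j) F j) = \sum_(j <- r | P j) adjmx (F j).
Proof.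
elim/big_rec2: _ => [|j A B _ <-].
  by apply/matrixP => i k; rewrite !adjmxE !mxE rmorph0.
by apply/matrixP => i k; rewrite !mxE rmorphD.
Qed.

Lemma hsE X Y : hs X Y = \sum_p \sum_q (X p q)^* * Y p q.
Proof.
rewrite /hs /mxtrace exchange_big /=; apply: eq_bigr => q _.
by rewrite mxE; apply: eq_bigr => p _; rewrite adjmxE.
Qed.

Fact hs_is_linear X : linear_for *%R (hs X).
Proof. by move=> a Y Z; rewrite /hs mulmxDr -scalemxAr mxtraceD mxtraceZ. Qed.
HB.instance Definition _ X :=
  GRing.isLinear.Build C 'M[C]_n C *%R (hs X) (hs_is_linear X).

Lemma hsC X Y : hs Y X = (hs X Y)^*.
Proof.
rewrite !hsE rmorph_sum; apply: eq_bigr => p _.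
by rewrite rmorph_sum; apply: eq_bigr => q _; rewrite rmorphM /= conjCK mulrC.
Qed.

Lemma hsZl X a Y : hs (a *: X) Y = a^* * hs X Y.
Proof. by rewrite hsC linearZ /= rmorphM /= -hsC. Qed.

Lemma hs_suml X (J : Type) (r : seq J) (P : pred J) (F : J -> 'M[C]_n) :
  hs (\sum_(j <- r | P j) F j) X = \sum_(j <- r | P j) hs (F j) X.
Proof.
rewrite hsC linear_sum rmorph_sum; apply: eq_bigr => j _.
by rewrite [RHS]hsC.
Qed.

Lemma hs_delta A (j k : 'I_n) : hs A (delta_mx j k) = (A j k)^*.
Proof.
rewrite hsE (bigD1 j) //= [X in _ + X]big1 ?addr0; last first.
  by move=> p ne; apply: big1 => q _; rewrite mxE (negbTE ne) mulr0.
rewrite (bigD1 k) //= [X in _ + X]big1 ?addr0; last first.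
  by move=> q ne; rewrite mxE eqxx (negbTE ne) mulr0.
by rewrite mxE !eqxx mulr1.
Qed.

Lemma hs_delta_parseval A B :
  \sum_(j < n) \sum_(k < n) (hs A (delta_mx j k))^* * hs B (delta_mx j k) = hs B A.
Proof.
rewrite hsE; apply: eq_bigr => j _; apply: eq_bigr => k _.
by rewrite !hs_delta conjCK mulrC.
Qed.

Lemma mulmx_adj_delta A B (j k p q : 'I_n) :
  (adjmx A *m delta_mx j k *m B) p q = (A j p)^* * B k q.
Proof.
rewrite mxE (bigD1 k) //= [X in _ + X]big1 ?addr0; last first.
  move=> l ne; rewrite mxE big1 ?mul0r // => r _.
  by rewrite [delta_mx _ _ _ _]mxE (negbTE ne) andbF mulr0.
rewrite mxE (bigD1 j) //= [X in _ + X]big1 ?addr0; last first.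
  by move=> r ne; rewrite [delta_mx _ _ _ _]mxE (negbTE ne) mulr0.
by rewrite !mxE !eqxx mulr1.
Qed.

Lemma hs_sandwich_delta A B A' B' :
  \sum_(j < n) \sum_(k < n)
     hs (adjmx A *m delta_mx j k *m B) (adjmx A' *m delta_mx j k *m B')
  = hs A' A * hs B B'.
Proof.
rewrite [hs A' A]hsE [hs B B']hsE mulr_suml; apply: eq_bigr => j _.
rewrite mulr_suml; under eq_bigr => k _ do rewrite hsE.
rewrite exchange_big; apply: eq_bigr => p _.
rewrite mulr_sumr; apply: eq_bigr => k _.
rewrite mulr_sumr; apply: eq_bigr => q _.
rewrite !mulmx_adj_delta rmorphM /= conjCK; ring.
Qed.

Lemma twirl_basis_change k (u : 'M[C]_k) (A B : 'I_k -> 'M[C]_n) X :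
  u *m adjmx u = 1%:M ->
  \sum_i adjmx (\sum_j u j i *: A j) *m X *m (\sum_l u l i *: B l)
    = \sum_j adjmx (A j) *m X *m B j.
Proof.
move=> /matrixP u_unitary.
have u_rows j l : \sum_i (u j i)^* * u l i = (l == j)%:R.
  have := u_unitary l j; rewrite !mxE => <-.
  by apply: eq_bigr => i _; rewrite adjmxE mulrC.
transitivity (\sum_i \sum_j \sum_l ((u j i)^* * u l i) *:
                (adjmx (A j) *m X *m B l)).
  apply: eq_bigr => i _; rewrite adjmx_sum !mulmx_suml; apply: eq_bigr => j _.
  rewrite adjmxZ -!scalemxAl mulmx_sumr scaler_sumr; apply: eq_bigr => l _.
  by rewrite -scalemxAr scalerA.
rewrite exchange_big; apply: eq_bigr => j _.
rewrite exchange_big (bigD1 j) //= [X in _ + X]big1 ?addr0.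
  by rewrite -scaler_suml u_rows eqxx scale1r.
by move=> l ne; rewrite -scaler_suml u_rows (negbTE ne) scale0r.
Qed.

End HilbertSchmidt.

Section LinearMapInnerProduct.
Variables (R : realType) (n : nat).
Local Notation C := R[i].
Implicit Types S T : 'End('M[C]_n).

Lemma hs_mapsC S T : hs_maps T S = (hs_maps S T)^*.
Proof.
rewrite /hs_maps rmorph_sum; apply: eq_bigr => i _.
by rewrite rmorph_sum; apply: eq_bigr => j _; rewrite hsC.
Qed.

Lemma hs_mapsZ (c1 c2 : C) S T :
  hs_maps (c1 *: S) (c2 *: T) = c1^* * c2 * hs_maps S T.
Proof.
rewrite /hs_maps mulr_sumr; apply: eq_bigr => i _.
rewrite mulr_sumr; apply: eq_bigr => j _.
by rewrite !scale_lfunE hsZl linearZ mulrA.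
Qed.

Lemma hs_maps0r S : hs_maps S (0 : 'End('M[C]_n)) = 0.
Proof.
rewrite /hs_maps big1 // => i _; rewrite big1 // => j _.
by rewrite zero_lfunE linear0.
Qed.

Lemma hs_maps_sumr (J : Type) (r : seq J) S (c : J -> C) (F : J -> 'End('M[C]_n)) :
  hs_maps S (\sum_(j <- r) c j *: F j) = \sum_(j <- r) c j * hs_maps S (F j).
Proof.
rewrite /hs_maps.
under eq_bigr => a _ do under eq_bigr => b _ do rewrite sum_lfunE linear_sum.
under [RHS]eq_bigr => j _ do rewrite mulr_sumr.
rewrite [RHS]exchange_big; apply: eq_bigr => a _.
under [RHS]eq_bigr => j _ do rewrite mulr_sumr.
rewrite [RHS]exchange_big; apply: eq_bigr => b _.
by apply: eq_bigr => j _; rewrite scale_lfunE linearZ.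
Qed.

Lemma hs_maps_suml (J : Type) (r : seq J) S (c : J -> C) (F : J -> 'End('M[C]_n)) :
  hs_maps (\sum_(j <- r) c j *: F j) S = \sum_(j <- r) (c j)^* * hs_maps (F j) S.
Proof.
rewrite hs_mapsC hs_maps_sumr rmorph_sum; apply: eq_bigr => j _.
by rewrite rmorphM /= -hs_mapsC.
Qed.

End LinearMapInnerProduct.

Lemma coord_span_fam (K : fieldType) (V : vectType K) (J : finType) (F : J -> V) v :
  v \in <<[seq F j | j : J]>>%VS -> exists c : J -> K, v = \sum_j c j *: F j.
Proof.
rewrite span_def big_map; elim: (enum J) v => [|j s IHs] v.
  rewrite big_nil memv0 => /eqP ->; exists (fun _ => 0).
  by rewrite big1 // => j _; rewrite scale0r.
rewrite big_cons => /memv_addP [a /vlineP [x ->] [b /IHs [c ->] ->]].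
exists (fun k => c k + (k == j)%:R * x).
under [RHS]eq_bigr => k _ do rewrite scalerDl.
rewrite big_split /= addrC; congr (_ + _).
rewrite (bigD1 j) //= eqxx mul1r big1 ?addr0 // => k /negbTE ->.
by rewrite mul0r scale0r.
Qed.

Section OrthonormalFamily.
Variables (R : realType) (n : nat) (J : finType).
Local Notation C := R[i].
Variable F : J -> 'End('M[C]_n).
Hypothesis F_orthonormal : forall j j', hs_maps (F j) (F j') = (j == j')%:R.

Lemma orthonormal_free : free [seq F j | j : J].
Proof.
have F_inj : injective F.
  move=> j j' eq_F; apply/eqP; have := F_orthonormal j j'.
  by rewrite eq_F F_orthonormal eqxx; case: (j == j') => // /eqP; rewrite eqr_nat.
set X := [seq F j | j : J].
have X_uniq : uniq X by rewrite map_inj_uniq // enum_uniq.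
have X_nth (i : 'I_(size X)) : exists j, X`_i = F j.
  have /mapP [j _ ->] : X`_i \in X by rewrite mem_nth.
  by exists j.
have X_orthonormal (i i' : 'I_(size X)) : hs_maps X`_i X`_i' = (i == i')%:R.
  have [j ej] := X_nth i; have [j' ej'] := X_nth i'.
  by rewrite ej ej' F_orthonormal -(inj_eq F_inj) -ej -ej' nth_uniq.
apply/(@freeP _ _ _ (in_tuple X)) => c c_X i.
have := congr1 (fun f : 'End('M[C]_n) => hs_maps X`_i f) c_X.
rewrite hs_maps0r hs_maps_sumr (bigD1 i) //= X_orthonormal eqxx mulr1.
by rewrite big1 ?addr0 // => i' ne; rewrite X_orthonormal eq_sym (negbTE ne) mulr0.
Qed.

Lemma dim_orthonormal_span : \dim <<[seq F j | j : J]>> = #|J|.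
Proof. by rewrite (eqP orthonormal_free) size_map -cardE. Qed.

Lemma orthonormal_coord_span f : f \in <<[seq F j | j : J]>>%VS ->
  f = \sum_j hs_maps (F j) f *: F j.
Proof.
move=> /coord_span_fam [c ->]; apply: eq_bigr => j _; congr (_ *: _).
rewrite hs_maps_sumr (bigD1 j) //= F_orthonormal eqxx mulr1 big1 ?addr0 //.
by move=> j' ne; rewrite F_orthonormal eq_sym (negbTE ne) mulr0.
Qed.

End OrthonormalFamily.

Section OrthonormalPair.
Variables (R : realType) (n : nat) (J : finType).
Local Notation C := R[i].
Variables P T : J -> 'End('M[C]_n).
Hypothesis P_orthonormal : forall j j', hs_maps (P j) (P j') = (j == j')%:R.
Hypothesis T_orthonormal : forall j j', hs_maps (T j) (T j') = (j == j')%:R.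
Hypothesis T_in_span : forall j, T j \in <<[seq P k | k : J]>>%VS.

Lemma orthonormal_basis_span : basis_of <<[seq P j | j : J]>> [seq T j | j : J].
Proof.
have T_free := orthonormal_free T_orthonormal.
rewrite /basis_of T_free andbT eqEdim; apply/andP; split.
  by apply/span_subvP => x /mapP [j _ ->]; exact: T_in_span.
by rewrite dim_orthonormal_span // (eqP T_free) size_map -cardE.
Qed.

Lemma gram_orthonormal_unitary :
  unitary_mx (\matrix_(p < #|J|, q < #|J|) hs_maps (P (enum_val p)) (T (enum_val q))).
Proof.
set U := \matrix_(p, q) _.
suff UU : adjmx U *m U = 1%:M by split; last exact: mulmx1C.
apply/matrixP => q q'; rewrite !mxE.
transitivity (\sum_j (hs_maps (P j) (T (enum_val q)))^* *
                hs_maps (P j) (T (enum_val q'))).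
  rewrite [RHS](reindex (@enum_val J J)) /=; last exact/onW_bij/enum_val_bij.
  by apply: eq_bigr => p _; rewrite !mxE.
rewrite -hs_maps_suml -orthonormal_coord_span //.
by rewrite T_orthonormal (inj_eq enum_val_inj).
Qed.

End OrthonormalPair.

Section UnitaryRepresentation.
Variables (R : realType) (n : nat) (G : groupType).
Local Notation C := R[i].
Variable rho : G -> 'M[C]_n.
Hypothesis rho_rep : unitary_rep rho.
Local Notation cg := (conj_act rho).
Implicit Types X Y : 'M[C]_n.

Lemma rho_unitary g : adjmx (rho g) *m rho g = 1%:M /\ rho g *m adjmx (rho g) = 1%:M.
Proof. by case: rho_rep => _ _ /(_ g). Qed.

Lemma rhoV g : rho (g^-1)%g = adjmx (rho g).
Proof.
case: rho_rep => rhoM rho1 _.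
have := rhoM g (g^-1)%g; rewrite mulgV rho1 => /(congr1 (mulmx (adjmx (rho g)))).
by rewrite mulmxA (rho_unitary g).1 mul1mx mulmx1 => ->.
Qed.

Lemma conj_actK g : cancel (cg g) (cg (g^-1)%g).
Proof.
move=> X; rewrite /conj_act rhoV adjmxK !mulmxA (rho_unitary g).1 mul1mx.
by rewrite -!mulmxA (rho_unitary g).1 mulmx1.
Qed.

Lemma conj_actVK g : cancel (cg (g^-1)%g) (cg g).
Proof. by move=> X; rewrite -{1}(invgK g) conj_actK. Qed.

Fact conj_act_is_linear g : linear (cg g).
Proof. by move=> a X Y; rewrite /conj_act mulmxDr mulmxDl -scalemxAr -scalemxAl. Qed.
HB.instance Definition _ g :=
  GRing.isLinear.Build C 'M[C]_n 'M[C]_n *:%R (cg g) (conj_act_is_linear g).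

Lemma hs_conj_act g X Y : hs (cg g X) (cg g Y) = hs X Y.
Proof.
rewrite /hs /conj_act !adjmx_mul adjmxK !mulmxA -[_ *m adjmx X *m _ *m _]mulmxA.
rewrite (rho_unitary g).1 mulmx1 -!mulmxA mxtrace_mulC !mulmxA.
by rewrite -[_ *m adjmx (rho g) *m rho g]mulmxA (rho_unitary g).1 mulmx1.
Qed.

Lemma span_equivariant (fs : seq 'End('M[C]_n)) :
  {in fs, forall f : 'End('M[C]_n), equivariant rho f} ->
  forall f, f \in <<fs>>%VS -> equivariant rho f.
Proof.
move=> fs_eq f; rewrite -[fs]in_tupleE => /coord_span -> g Y.
rewrite !sum_lfunE linear_sum; apply: eq_bigr => i _.
by rewrite !scale_lfunE linearZ /= fs_eq // mem_nth.
Qed.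

Lemma schur_isomorphic (U W : {vspace 'M[C]_n}) (h : 'End('M[C]_n)) X0 :
  irreducible_sub rho U -> irreducible_sub rho W ->
  (forall X, X \in U -> h X \in W) ->
  (forall g X, X \in U -> h (cg g X) = cg g (h X)) ->
  X0 \in U -> h X0 != 0 -> isomorphic_sub rho U W.
Proof.
move=> [_ U_inv U_irr] [_ _ W_irr] hUW h_eq X0U hX0.
have ker0 : (U :&: lker h)%VS = 0%VS.
  have ker_inv : invariant_sub rho (U :&: lker h)%VS.
    move=> g X; rewrite !memv_cap !memv_ker => /andP [XU /eqP hX].
    by rewrite U_inv //= h_eq // hX linear0.
  case: (U_irr _ (capvSl _ _) ker_inv) => // kerU.
  have : X0 \in (U :&: lker h)%VS by rewrite kerU.
  by rewrite memv_cap memv_ker (negbTE hX0) andbF.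
have im_sub : (h @: U <= W)%VS.
  by apply/subvP => Y /memv_imgP [X XU ->]; exact: hUW.
have im_inv : invariant_sub rho (h @: U)%VS.
  by move=> g Y /memv_imgP [X XU ->]; rewrite -h_eq //; apply/memv_img/U_inv.
have imW : (h @: U)%VS = W.
  case: (W_irr _ im_sub im_inv) => // im0.
  have : h X0 \in (h @: U)%VS by apply: memv_img.
  by rewrite im0 memv0 (negbTE hX0).
by exists h; split => //; rewrite -imW limg_dim_eq.
Qed.

End UnitaryRepresentation.

Section Decomposition.
Variables (R : realType) (n : nat) (G : groupType).
Local Notation C := R[i].
Variable rho : G -> 'M[C]_n.
Hypothesis rho_rep : unitary_rep rho.
Variables (I : finType) (m d : I -> nat).
Variable E : forall xi : I, 'I_(m xi) -> 'I_(d xi) -> 'M[C]_n.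
Hypothesis E_dec : decomposition rho E.
Local Notation cg := (conj_act rho).
Local Notation Esp := (Esp E).
Implicit Types X Y : 'M[C]_n.

Lemma hs_E xi xi' (a : 'I_(m xi)) (a' : 'I_(m xi')) i i' :
  hs (E a i) (E a' i') = ((xi == xi') && (a == a' :> nat) && (i == i' :> nat))%:R.
Proof. by case: E_dec => _ [->]. Qed.

Lemma hs_E_same xi (a a' : 'I_(m xi)) i i' :
  hs (E a i) (E a' i') = ((a == a') && (i == i'))%:R.
Proof. by rewrite hs_E eqxx. Qed.

Lemma sum_Esp : (\sum_(xi : I) \sum_(a < m xi) Esp a)%VS = fullv.
Proof. by case: E_dec => _ [_ []]. Qed.

Lemma Esp_irreducible xi (a : 'I_(m xi)) : irreducible_sub rho (Esp a).
Proof. by case: E_dec => _ [_ [_ []]]. Qed.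

Lemma Proj_conj_act_E xi (a b : 'I_(m xi)) g i :
  Proj E a b (cg g (E a i)) = cg g (E b i).
Proof. by case: E_dec => _ [_ [_ [_ [phi_eq _]]]]; exact: phi_eq. Qed.

Lemma Esp_not_isomorphic xi xi' (a : 'I_(m xi)) (a' : 'I_(m xi')) :
  xi != xi' -> ~ isomorphic_sub rho (Esp a) (Esp a').
Proof. by case: E_dec => _ [_ [_ [_ [_ ]]]]; apply. Qed.

Lemma memv_E xi (a : 'I_(m xi)) i : E a i \in Esp a.
Proof. by apply/memv_span/map_f; rewrite mem_enum. Qed.

Lemma Esp_conj_act xi (a : 'I_(m xi)) g X : X \in Esp a -> cg g X \in Esp a.
Proof. by case: (Esp_irreducible a) => _ Esp_inv _; exact: Esp_inv. Qed.

Lemma hs_E_comb xi (a : 'I_(m xi)) (c : 'I_(d xi) -> C) j :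
  hs (E a j) (\sum_i c i *: E a i) = c j.
Proof.
rewrite linear_sum (bigD1 j) //= linearZ /= hs_E_same !eqxx mulr1.
rewrite big1 ?addr0 // => i ne.
by rewrite linearZ /= hs_E_same eqxx eq_sym (negbTE ne) mulr0.
Qed.

Lemma Esp_expansion xi (a : 'I_(m xi)) X : X \in Esp a ->
  X = \sum_i hs (E a i) X *: E a i.
Proof.
have -> : Esp a = <<[tuple E a i | i < d xi]>>%VS by congr (span _).
move=> XE; have [c ->] : exists c : 'I_(d xi) -> C, X = \sum_i c i *: E a i.
  by move: XE => /coord_span ->; eexists; apply: eq_bigr => i _; rewrite nth_mktuple.
by apply: eq_bigr => i _; rewrite hs_E_comb.
Qed.

Lemma Esp_orthogonal xi xi' (a : 'I_(m xi)) (a' : 'I_(m xi')) j X :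
  X \in Esp a -> ~~ ((xi' == xi) && (a' == a :> nat)) -> hs (E a' j) X = 0.
Proof.
move=> /Esp_expansion -> ne; rewrite linear_sum big1 // => i _.
by rewrite linearZ /= hs_E (negbTE ne) mulr0.
Qed.

Fact Proj_is_linear xi (a b : 'I_(m xi)) : linear (Proj E a b).
Proof.
move=> k X Y; rewrite /Proj scaler_sumr -big_split; apply: eq_bigr => i _.
by rewrite linearP /= scalerDl scalerA.
Qed.
HB.instance Definition _ xi (a b : 'I_(m xi)) :=
  GRing.isLinear.Build C 'M[C]_n 'M[C]_n *:%R (Proj E a b) (Proj_is_linear a b).

Fact Twirl_is_linear xi (a b : 'I_(m xi)) : linear (Twirl E a b).
Proof.
move=> k X Y; rewrite /Twirl scaler_sumr -big_split; apply: eq_bigr => i _.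
by rewrite mulmxDr mulmxDl -scalemxAr -scalemxAl.
Qed.
HB.instance Definition _ xi (a b : 'I_(m xi)) :=
  GRing.isLinear.Build C 'M[C]_n 'M[C]_n *:%R (Twirl E a b) (Twirl_is_linear a b).

Definition E_expansion X :=
  \sum_xi \sum_(a < m xi) \sum_(i < d xi) hs (E a i) X *: E a i.

Fact E_expansion_is_linear : linear E_expansion.
Proof.
move=> k X Y; rewrite /E_expansion scaler_sumr -big_split; apply: eq_bigr => xi _.
rewrite scaler_sumr -big_split; apply: eq_bigr => a _.
rewrite scaler_sumr -big_split; apply: eq_bigr => i _.
by rewrite linearP /= scalerDl scalerA.
Qed.
HB.instance Definition _ :=
  GRing.isLinear.Build C 'M[C]_n 'M[C]_n *:%R E_expansion E_expansion_is_linear.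

Lemma E_expansion_Esp xi (a : 'I_(m xi)) X : X \in Esp a -> E_expansion X = X.
Proof.
move=> XE; rewrite [RHS](Esp_expansion XE) /E_expansion (bigD1 xi) //=.
rewrite [X in _ + X]big1 ?addr0; last first.
  move=> xi' ne; apply: big1 => a' _; apply: big1 => i _.
  by rewrite (Esp_orthogonal _ XE) ?scale0r // (negbTE ne).
rewrite (bigD1 a) //= [X in _ + X]big1 ?addr0 // => a' ne; apply: big1 => i _.
by rewrite (Esp_orthogonal _ XE) ?scale0r // eqxx.
Qed.

Lemma E_expansion_id X : E_expansion X = X.
Proof.
have : X \in fullv by rewrite memvf.
rewrite -sum_Esp => /memv_sumP [Xs Xs_in ->]; rewrite linear_sum.
apply: eq_bigr => xi _; have /memv_sumP [Ys Ys_in ->] := Xs_in xi isT.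
by rewrite linear_sum; apply: eq_bigr => a _; exact: E_expansion_Esp (Ys_in a isT).
Qed.

Lemma lfun_ext_E (f1 f2 : 'End('M[C]_n)) :
  (forall xi (a : 'I_(m xi)) i, f1 (E a i) = f2 (E a i)) -> f1 = f2.
Proof.
move=> f12; apply/lfunP => X; rewrite -[X]E_expansion_id /E_expansion !linear_sum.
apply: eq_bigr => xi _; rewrite !linear_sum; apply: eq_bigr => a _.
by rewrite !linear_sum; apply: eq_bigr => i _; rewrite !linearZ /= f12.
Qed.

Lemma Proj_E xi (a b : 'I_(m xi)) i : Proj E a b (E a i) = E b i.
Proof.
rewrite /Proj (bigD1 i) //= hs_E_same !eqxx scale1r big1 ?addr0 // => j ne.
by rewrite hs_E_same eqxx (negbTE ne) scale0r.
Qed.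

Lemma Proj_E_other xi xi' (a b : 'I_(m xi)) (a' : 'I_(m xi')) j :
  ~~ ((xi == xi') && (a == a' :> nat)) -> Proj E a b (E a' j) = 0.
Proof.
by move=> ne; rewrite /Proj big1 // => i _; rewrite hs_E (negbTE ne) scale0r.
Qed.

Lemma Proj_equivariant xi (a b : 'I_(m xi)) : equivariant rho (Proj E a b).
Proof.
move=> g X; suff /lfunP/(_ X) : (linfun (Proj E a b) \o linfun (cg g) =
                                 linfun (cg g) \o linfun (Proj E a b))%VF.
  by rewrite !comp_lfunE !lfunE.
apply: lfun_ext_E => xi' a' j; rewrite !comp_lfunE !lfunE /=.
have [/andP [/eqP eq_xi eq_a] | ne] := boolP ((xi == xi') && (a == a' :> nat)).
  subst xi'; have -> : a' = a by apply/val_inj/eqP; rewrite eq_sym.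
  by rewrite Proj_E Proj_conj_act_E.
rewrite Proj_E_other // linear0 /Proj big1 // => i _.
by rewrite (Esp_orthogonal _ (Esp_conj_act g (memv_E a' j))) ?scale0r.
Qed.

Lemma hs_E_Proj xi (a b : 'I_(m xi)) j Y : hs (E b j) (Proj E a b Y) = hs (E a j) Y.
Proof. exact: hs_E_comb. Qed.

Lemma Proj_in xi (a b : 'I_(m xi)) Y : Proj E a b Y \in Esp b.
Proof. by apply: rpred_sum => i _; apply/memvZ/memv_E. Qed.

Lemma d_gt0 xi : (0 < d xi)%N.
Proof.
have a : 'I_(m xi) by apply: Ordinal (_ : 0 < m xi)%N; case: E_dec.
have [Esp_neq0 _ _] := Esp_irreducible a.
rewrite lt0n; apply: contraNneq Esp_neq0 => d0.
suff E0 : [seq E a i | i : 'I_(d xi)] = [::] by rewrite /Esp E0 span_nil.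
by apply/nilP; rewrite /nilp size_map -cardE card_ord d0.
Qed.

Lemma d_neq0 xi : (d xi)%:R != 0 :> C.
Proof. by rewrite pnatr_eq0 -lt0n d_gt0. Qed.

(* An eigenvector of the matrix of k in the basis {E_i^a}_i lies in the
   invariant subspace Esp a :&: ker (k - lam), which is therefore Esp a. *)
Lemma schur_scalar xi (a : 'I_(m xi)) (k : 'End('M[C]_n)) :
  (forall X, X \in Esp a -> k X \in Esp a) ->
  (forall g X, X \in Esp a -> k (cg g X) = cg g (k X)) ->
  exists lam, forall X, X \in Esp a -> k X = lam *: X.
Proof.
move=> k_in k_eq.
pose M : 'M[C]_(d xi) := \matrix_(i, j) hs (E a j) (k (E a i)).
have [lam] : exists lam, root (char_poly M) lam.
  by apply/closed_rootP; rewrite size_char_poly; case: (d xi) (d_gt0 xi).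
rewrite -eigenvalue_root_char => /eigenvalueP [v vM v_neq0].
pose X0 := \sum_i v 0 i *: E a i.
have X0_in : X0 \in Esp a by apply: rpred_sum => i _; apply/memvZ/memv_E.
have X0_neq0 : X0 != 0.
  apply: contraNneq v_neq0 => X00; apply/eqP/matrixP => i0 i.
  by rewrite ord1 mxE -(hs_E_comb a (v 0) i) -/X0 X00 linear0.
have kX0 : k X0 = lam *: X0.
  rewrite /X0 linear_sum scaler_sumr.
  under eq_bigr => i _ do
    rewrite linearZ /= (Esp_expansion (k_in _ (memv_E a i))) scaler_sumr.
  rewrite exchange_big /=; apply: eq_bigr => j _.
  under eq_bigr => i _ do rewrite scalerA.
  rewrite -scaler_suml scalerA; congr (_ *: _).
  have := congr1 (fun w : 'rV[C]_(d xi) => w 0 j) vM; rewrite /= !mxE => <-.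
  by apply: eq_bigr => i _; rewrite !mxE.
have k_lam Y : (k - lam *: \1)%VF Y = k Y - lam *: Y.
  by rewrite add_lfunE opp_lfunE scale_lfunE id_lfunE.
pose U := (Esp a :&: lker (k - lam *: \1)%VF)%VS.
have U_inv : invariant_sub rho U.
  move=> g X; rewrite !memv_cap !memv_ker !k_lam => /andP [XE /eqP kX].
  by rewrite Esp_conj_act //= k_eq // -linearZ -linearB kX linear0.
have [_ _ Esp_irr] := Esp_irreducible a.
case: (Esp_irr U (capvSl _ _) U_inv) => [U0|UE].
  have : X0 \in U by rewrite memv_cap memv_ker k_lam kX0 subrr eqxx X0_in.
  by rewrite U0 memv0 (negbTE X0_neq0).
exists lam => X XE; have : X \in U by rewrite UE.
by rewrite memv_cap memv_ker k_lam subr_eq0 => /andP [_ /eqP].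
Qed.

Section EquivariantMap.
Variable f : 'End('M[C]_n).
Hypothesis f_eq : equivariant rho f.

Lemma equivariant_hs_E_other xi xi' (a : 'I_(m xi)) (b : 'I_(m xi')) i j :
  xi != xi' -> hs (E b j) (f (E a i)) = 0.
Proof.
move=> ne; apply/eqP/negPn/negP => hs_neq0.
apply: (Esp_not_isomorphic (a := a) (a' := b) ne).
pose h := (linfun (Proj E b b) \o f)%VF.
have hE X : h X = Proj E b b (f X) by rewrite comp_lfunE lfunE.
apply: (@schur_isomorphic _ _ _ _ _ _ h (E a i)) (memv_E a i) _.
- exact: Esp_irreducible.
- exact: Esp_irreducible.
- by move=> X _; rewrite hE Proj_in.
- by move=> g X _; rewrite !hE f_eq Proj_equivariant.
by apply: contraNneq hs_neq0 => h0; rewrite -(hs_E_Proj b b) -hE h0 linear0.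
Qed.

Definition block_coef xi (a b : 'I_(m xi)) :=
  (d xi)%:R^-1 * \sum_i hs (E b i) (f (E a i)).

Lemma equivariant_hs_E xi (a b : 'I_(m xi)) i j :
  hs (E b j) (f (E a i)) = block_coef a b * (i == j)%:R.
Proof.
pose k := (linfun (Proj E b a) \o f)%VF.
have kE X : k X = Proj E b a (f X) by rewrite comp_lfunE lfunE.
have [lam k_lam] : exists lam, forall X, X \in Esp a -> k X = lam *: X.
  apply: schur_scalar => [X _|g X _]; first by rewrite kE Proj_in.
  by rewrite !kE f_eq Proj_equivariant.
have hs_lam i' j' : hs (E b j') (f (E a i')) = lam * (i' == j')%:R.
  have := congr1 (hs (E a j')) (k_lam _ (memv_E a i')).
  by rewrite kE hs_E_Proj linearZ /= hs_E_same eqxx eq_sym.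
suff -> : block_coef a b = lam by [].
rewrite /block_coef; under eq_bigr => l _ do rewrite hs_lam eqxx mulr1.
by rewrite sumr_const card_ord -[lam *+ _]mulr_natr mulrCA mulVf ?mulr1 // d_neq0.
Qed.

Lemma equivariant_E xi (a : 'I_(m xi)) i :
  f (E a i) = \sum_b block_coef a b *: E b i.
Proof.
rewrite -[LHS]E_expansion_id /E_expansion (bigD1 xi) //= [X in _ + X]big1 ?addr0.
  apply: eq_bigr => b _; rewrite (bigD1 i) //= equivariant_hs_E eqxx mulr1.
  rewrite [X in _ + X]big1 ?addr0 // => j ne.
  by rewrite equivariant_hs_E eq_sym (negbTE ne) mulr0 scale0r.
move=> xi' ne; apply: big1 => b _; apply: big1 => j _.
by rewrite equivariant_hs_E_other ?scale0r // eq_sym.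
Qed.

Lemma equivariant_Proj_comb :
  f = \sum_xi \sum_(a < m xi) \sum_(b < m xi) block_coef a b *: linfun (Proj E a b).
Proof.
apply: lfun_ext_E => xi a i; rewrite equivariant_E sum_lfunE [RHS](bigD1 xi) //=.
rewrite [X in _ + X]big1 ?addr0; last first.
  move=> xi' ne; rewrite sum_lfunE big1 // => a' _; rewrite sum_lfunE big1 // => b _.
  by rewrite scale_lfunE lfunE /= Proj_E_other ?scaler0 // (negbTE ne).
rewrite sum_lfunE [RHS](bigD1 a) //= [X in _ + X]big1 ?addr0; last first.
  move=> a' ne; rewrite sum_lfunE big1 // => b _.
  by rewrite scale_lfunE lfunE /= Proj_E_other ?scaler0 // eqxx.
by rewrite sum_lfunE; apply: eq_bigr => b _; rewrite scale_lfunE lfunE /= Proj_E.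
Qed.

End EquivariantMap.

Definition HomG := <<[seq PiN E k | k : Idx m]>>%VS.

Lemma Proj_PiN xi (a b : 'I_(m xi)) :
  linfun (Proj E a b) = sqrtC (d xi)%:R *: PiN E (Tagged (pairT m) (a, b)).
Proof. by rewrite /PiN scalerA mulfV ?scale1r // sqrtC_eq0 d_neq0. Qed.

Lemma PiN_equivariant k : equivariant rho (PiN E k).
Proof. by move=> g Y; rewrite !scale_lfunE !lfunE /= Proj_equivariant linearZ. Qed.

Lemma memHomG f : f \in HomG <-> equivariant rho f.
Proof.
split; first by apply: span_equivariant => _ /mapP [k _ ->]; exact: PiN_equivariant.
move=> f_eq; rewrite (equivariant_Proj_comb f_eq).
apply: rpred_sum => xi _; apply: rpred_sum => a _; apply: rpred_sum => b _.
by rewrite Proj_PiN; apply/memvZ/memvZ/memv_span/map_f; rewrite mem_enum.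
Qed.

Definition conj_coord xi (a : 'I_(m xi)) g : 'M[C]_(d xi) :=
  \matrix_(j, i) hs (E a j) (cg g (E a i)).

Lemma conj_act_E_coord xi (a b : 'I_(m xi)) g i :
  cg g (E b i) = \sum_j conj_coord a g j i *: E b j.
Proof. by rewrite -(Proj_conj_act_E a b); apply: eq_bigr => j _; rewrite mxE. Qed.

Lemma conj_coord_unitary xi (a : 'I_(m xi)) g :
  conj_coord a g *m adjmx (conj_coord a g) = 1%:M.
Proof.
apply: mulmx1C; apply/matrixP => i i'; rewrite !mxE.
transitivity (hs (cg g (E a i)) (cg g (E a i'))).
  rewrite [cg g (E a i')](conj_act_E_coord a) linear_sum; apply: eq_bigr => j _.
  by rewrite linearZ /= !mxE -hsC mulrC.
by rewrite hs_conj_act // hs_E_same eqxx.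
Qed.

(* As every phi_{ab} is equivariant, g acts on all the bases {E_i^a}_i by the
   same unitary coordinate matrix, and the twirl is invariant under such a
   simultaneous change of orthonormal bases. *)
Lemma Twirl_equivariant xi (a b : 'I_(m xi)) : equivariant rho (Twirl E a b).
Proof.
move=> g X; set h := (g^-1)%g.
suff <- : cg h (Twirl E a b (cg g X)) = Twirl E a b X by rewrite conj_actVK.
transitivity (\sum_i adjmx (cg h (E a i)) *m X *m cg h (E b i)).
  rewrite /Twirl linear_sum; apply: eq_bigr => i _.
  by rewrite /= /conj_act /h rhoV // adjmxK !adjmx_mul adjmxK !mulmxA.
under eq_bigr => i _ do rewrite !(conj_act_E_coord a).
exact/twirl_basis_change/conj_coord_unitary.
Qed.

Lemma TwN_equivariant k : equivariant rho (TwN E k).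
Proof. by move=> g Y; rewrite !scale_lfunE !lfunE /= Twirl_equivariant linearZ. Qed.

Definition E_gram xi rh (a b : 'I_(m xi)) (mu nu : 'I_(m rh)) :=
  \sum_(i < d xi) \sum_(i' < d rh) hs (E mu i') (E a i) * hs (E b i) (E nu i').

Lemma hs_maps_Proj xi rh (a b : 'I_(m xi)) (mu nu : 'I_(m rh)) :
  hs_maps (linfun (Proj E a b)) (linfun (Proj E mu nu)) = E_gram a b mu nu.
Proof.
rewrite /hs_maps /E_gram.
under eq_bigr => j _ do under eq_bigr => k _ do rewrite !lfunE /= /Proj hs_suml.
under [RHS]eq_bigr => i _ do under eq_bigr => i' _ do
  rewrite -hs_delta_parseval mulr_suml.
under [RHS]eq_bigr => i _ do under eq_bigr => i' _ do
  under eq_bigr => j _ do rewrite mulr_suml.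
rewrite [RHS]exchange_big22; apply: eq_bigr => j _; apply: eq_bigr => k _.
apply: eq_bigr => i _; rewrite hsZl linear_sum mulr_sumr; apply: eq_bigr => i' _.
by rewrite linearZ /= mulrA.
Qed.

Lemma hs_maps_Twirl xi rh (a b : 'I_(m xi)) (mu nu : 'I_(m rh)) :
  hs_maps (linfun (Twirl E a b)) (linfun (Twirl E mu nu)) = E_gram a b mu nu.
Proof.
rewrite /hs_maps /E_gram.
under eq_bigr => j _ do under eq_bigr => k _ do
  rewrite !lfunE /= /Twirl hs_suml.
under eq_bigr => j _ do under eq_bigr => k _ do under eq_bigr => i _ do
  rewrite linear_sum.
rewrite exchange_big22; apply: eq_bigr => i _; apply: eq_bigr => i' _.
exact: hs_sandwich_delta.
Qed.

Lemma E_gram_Idx (k k' : Idx m) :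
  E_gram (tagged k).1 (tagged k).2 (tagged k').1 (tagged k').2 =
  (k == k')%:R * (d (tag k))%:R.
Proof.
case: k => xi [a b]; case: k' => rh [mu nu] /=; rewrite /E_gram /=.
have [eq_xi|ne] := eqVneq xi rh; last first.
  have -> : (Tagged (pairT m) (a, b) == Tagged (pairT m) (mu, nu)) = false.
    by apply: negbTE; apply: contra ne => /eqP /(congr1 tag) /= ->.
  rewrite mul0r; apply: big1 => i _; apply: big1 => i' _.
  by rewrite hs_E eq_sym (negbTE ne) mul0r.
subst rh; rewrite eq_Tagged /= xpair_eqE.
under eq_bigr => i _.
  rewrite (bigD1 i) //= [X in _ + X]big1 ?addr0; last first.
    by move=> i' ne; rewrite hs_E_same (negbTE ne) andbF mul0r.
  rewrite !hs_E_same !eqxx !andbT.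
over.
rewrite sumr_const card_ord -[_ *+ d xi]mulr_natr [mu == a]eq_sym.
by case: (a == mu); case: (b == nu); rewrite ?mulr1 ?mulr0 ?mul0r.
Qed.

Lemma normalized_E_gram (k k' : Idx m) :
  ((sqrtC (d (tag k))%:R)^-1)^* * (sqrtC (d (tag k'))%:R)^-1 *
    E_gram (tagged k).1 (tagged k).2 (tagged k').1 (tagged k').2 = (k == k')%:R.
Proof.
rewrite E_gram_Idx; have [<-|_] := eqVneq k k'; last by rewrite !mul0r mulr0.
rewrite conj_Creal ?rpredV ?ger0_real ?sqrtC_ge0 ?ler0n // mul1r.
by rewrite -invfM -expr2 sqrtCK mulVf ?d_neq0.
Qed.

Lemma PiN_orthonormal : orthonormal_family (PiN E).
Proof. by move=> k k'; rewrite hs_mapsZ hs_maps_Proj normalized_E_gram. Qed.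

Lemma TwN_orthonormal : orthonormal_family (TwN E).
Proof. by move=> k k'; rewrite hs_mapsZ hs_maps_Twirl normalized_E_gram. Qed.

Lemma TwN_in_HomG k : TwN E k \in HomG.
Proof. exact/memHomG/TwN_equivariant. Qed.

End Decomposition.

Lemma card_Idx (I : finType) (m : I -> nat) : #|Idx m| = (\sum_(xi : I) m xi ^ 2)%N.
Proof.
rewrite card_tagged sumnE big_map big_enum /=.
by apply: eq_bigr => xi _; rewrite card_prod card_ord mulnn.
Qed.

Theorem mainTheorem15 (R : realType) (n : nat) (G : groupType)
  (rho : G -> 'M[R[i]]_n) (hrho : unitary_rep rho)
  (I : finType) (m d : I -> nat)
  (E : forall xi : I, 'I_(m xi) -> 'I_(d xi) -> 'M[R[i]]_n)
  (hE : decomposition rho E) :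
  exists HomG : {vspace 'End('M[R[i]]_n)},
    [/\ (forall f : 'End('M[R[i]]_n), f \in HomG <-> equivariant rho f),
        \dim HomG = (\sum_(xi : I) m xi ^ 2)%N,
        basis_of HomG [seq PiN E k | k : Idx m] /\ orthonormal_family (PiN E),
        basis_of HomG [seq TwN E k | k : Idx m] /\ orthonormal_family (TwN E)
      & unitary_mx (Umx E)].
Proof.
have PiN_on := PiN_orthonormal hE; have TwN_on := TwN_orthonormal hE.
have PiN_in k : PiN E k \in HomG E by apply/(memHomG hE)/(PiN_equivariant hE).
have TwN_in := TwN_in_HomG hrho hE.
exists (HomG E); split.
- exact: memHomG.
- by rewrite dim_orthonormal_span // card_Idx.
- by split; first exact: (orthonormal_basis_span PiN_on PiN_on PiN_in).
- by split; first exact: (orthonormal_basis_span PiN_on TwN_on TwN_in).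
- exact: (gram_orthonormal_unitary PiN_on TwN_on TwN_in).
Qed.
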